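(* Let $(X,d_X)$ be a discrete countable metric space and $A\subset X$ nonempty such that $X\setminus N_k(A)\neq\emptyset$ for every $k\in\mathbb N$. Then $M_{X,d^A}$ is a submodule of the Hilbert $C^*_u(X)$-module $C^*_u(X)$ (with inner product $\langle S,T\rangle=S^*T$) which is not orthogonally complemented; more precisely, $M_{X,d^A}\ne C^*_u(X)$ while its orthogonal complement in $C^*_u(X)$ is $\{0\}$.
   Context: $H_X=\ell^2(X)$, $C^*_u(X)$ is the norm closure in $\mathbb B(H_X)$ of bounded finite-propagation operators (propagation at most $L$ means $(\delta_x,T\delta_y)=0$ whenever $d_X(x,y)\ge L$). $N_k(A)=\{x\in X:d_X(x,A)\le k\}$. With $X_0,X_1$ two copies of $X$ ($x\in X$ denoted $x_i$ in $X_i$), $d^A$ is the metric on $X_0\sqcup X_1$ given by $d^A(x_i,y_i)=d_X(x,y)$, $i=0,1$, and $d^A(x_0,y_1)=\inf_{z\in A}[d_X(x,z)+d_X(y,z)+1]$. $M_{X,d^A}$ is the norm closure of the bounded operators $T:H_{X_0}\to H_{X_1}$ of finite propagation with respect to $d^A$ (there is $L$ with $(\delta_{y_1},T\delta_{x_0})=0$ whenever $d^A(x_0,y_1)\ge L$), regarded as a subset of $\mathbb B(H_X)$ via the identification $H_{X_0}=H_{X_1}=H_X$. *)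

From HB Require Import structures.
From mathcomp Require Import all_boot all_order all_algebra.
From mathcomp Require Import all_classical all_reals all_analysis.
From mathcomp Require Import complex.
Set Implicit Arguments. Unset Strict Implicit. Unset Printing Implicit Defensive.
Import Order.TTheory GRing.Theory Num.Theory.
Local Open Scope classical_set_scope.
Local Open Scope ring_scope.

Section Defs.
Variables (R : realType) (X : countType).

Definition is_metric (d : X -> X -> R) : Prop :=
  [/\ forall x y, 0 <= d x y, forall x y, d x y = 0 <-> x = y,
      forall x y, d x y = d y x & forall x y z, d x z <= d x y + d y z].

Definition discrete_metric (d : X -> X -> R) : Prop :=
  forall x, exists2 e : R, 0 < e & forall y, d x y < e -> y = x.

Definition dist_to (d : X -> X -> R) (A : set X) (x : X) : R :=
  inf [set d x z | z in A].
Definition Nbhd (d : X -> X -> R) (A : set X) (k : nat) : set X :=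
  [set x | dist_to d A x <= k%:R].

(* d^A(x_0, y_1) *)
Definition dA01 (d : X -> X -> R) (A : set X) (x y : X) : R :=
  inf [set d x z + d y z + 1 | z in A].

Definition reC (z : R[i]) : R := let: Complex a _ := z in a.
Definition imC (z : R[i]) : R := let: Complex _ b := z in b.

Definition vec := X -> R[i].
Definition sqnorm (f : vec) : \bar R :=
  \esum_(x in [set: X]) ((reC (f x)) ^+ 2 + (imC (f x)) ^+ 2)%:E.
Definition in_l2 (f : vec) : Prop := (sqnorm f < +oo)%E.
Definition delta (y : X) : vec := fun x => if x == y then 1 else 0.

Definition rsum (h : X -> R) : R :=
  fine (\esum_(x in [set: X]) (Num.max (h x) 0)%:E)
  - fine (\esum_(x in [set: X]) (Num.max (- h x) 0)%:E).
Definition ip (u v : vec) : R[i] :=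
  Complex (rsum (fun x => reC (conjc (u x) * v x)))
          (rsum (fun x => imC (conjc (u x) * v x))).

(* operators on H_X; only their values on l^2(X) matter *)
Definition op := vec -> vec.
Definition bounded_op (T : op) : Prop :=
  [/\ forall f, in_l2 f -> in_l2 (T f),
      forall (a : R[i]) f g, in_l2 f -> in_l2 g ->
        T (fun x => a * f x + g x) = (fun x => a * T f x + T g x)
    & exists c : R, forall f, in_l2 f -> (sqnorm (T f) <= c%:E * sqnorm f)%E].

Definition op_close (T S : op) (eps : R) : Prop :=
  forall f, in_l2 f ->
    (sqnorm (fun x => (T f x - S f x)%R) <= (eps ^+ 2)%:E * sqnorm f)%E.

Definition op_closure (P : op -> Prop) (T : op) : Prop :=
  bounded_op T /\ forall eps : R, 0 < eps -> exists2 S, P S & op_close T S eps.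

Definition finite_prop (d : X -> X -> R) (T : op) : Prop :=
  exists L : R, forall x y, L <= d x y -> T (delta y) x = 0.

Definition Cu (d : X -> X -> R) : op -> Prop :=
  op_closure (fun S => bounded_op S /\ finite_prop d S).

Definition finite_prop_dA (d : X -> X -> R) (A : set X) (T : op) : Prop :=
  exists L : R, forall x y, L <= dA01 d A x y -> T (delta x) y = 0.

Definition MdA (d : X -> X -> R) (A : set X) : op -> Prop :=
  op_closure (fun S => bounded_op S /\ finite_prop_dA d A S).

End Defs.

From HB Require Import structures.
From mathcomp Require Import all_boot all_order all_algebra.
From mathcomp Require Import all_classical all_reals all_analysis.
From mathcomp Require Import complex.
From mathcomp Require Import ring lra.
Set Implicit Arguments. Unset Strict Implicit. Unset Printing Implicit Defensive.
Import Order.TTheory GRing.Theory Num.Theory.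
Local Open Scope classical_set_scope.
Local Open Scope ring_scope.

(* Hence (S g)(y) = 0 whenever the matrix
     entries (S delta_z)(y) vanish on the support of g ([op_vanish]).
   - Norm closures: the closure of a family is stable under sums, scalars and
     compositions as soon as the approximating families are ([op_closure_*]).
   - Geometry of d^A: d(x,y) + 1 <= d^A(x_0,y_1), a triangle inequality, and
     d^A(x_0,x_1) >= 2 d(x,A) + 1, unbounded by hypothesis.  Consequently
     finite d^A-propagation is stable under sums, scalars and right
     composition with finite d-propagation operators ([op_vanish] is needed
     here because the d-neighbourhoods of a point may be infinite).
   - The module M_{X,d^A}: it is a right C*_u(X)-submodule; the identity lies
     in C*_u(X) but stays at distance 1 from every finite d^A-propagation
     operator, whose diagonal vanishes far from A; and the rank-one operators
     h |-> h(y) delta_y lie in M_{X,d^A} and detect each coordinate of T g,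
     so an operator orthogonal to M_{X,d^A} is zero. *)

Section ComplexModulus.
Variable R : realType.
Implicit Types a b z : R[i].

Definition sqmod z : R := reC z ^+ 2 + imC z ^+ 2.

Lemma sqmod_ge0 z : 0 <= sqmod z.
Proof. by rewrite addr_ge0 // sqr_ge0. Qed.

Lemma sqmod_gt0 z : z != 0 -> 0 < sqmod z.
Proof.
move=> nz; rewrite lt_neqAle sqmod_ge0 andbT eq_sym; move: nz.
case: z => a b; apply: contra; rewrite /sqmod /= paddr_eq0 ?sqr_ge0 // !sqrf_eq0.
by case/andP => /eqP-> /eqP->.
Qed.

Lemma sqmod0 : sqmod 0 = 0.
Proof. by rewrite /sqmod /= expr0n /= addr0. Qed.

Lemma sqmod1 : sqmod 1 = 1.
Proof. by rewrite /sqmod /= expr1n expr0n /= addr0. Qed.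

Lemma sqmodM a b : sqmod (a * b) = sqmod a * sqmod b.
Proof. by case: a => a1 a2; case: b => b1 b2; rewrite /sqmod /=; ring. Qed.

Lemma sqmodD a b : sqmod (a + b) <= 2 * (sqmod a + sqmod b).
Proof.
case: a => a1 a2; case: b => b1 b2; rewrite /sqmod /=.
have := sqr_ge0 (a1 - b1); have := sqr_ge0 (a2 - b2); nra.
Qed.

End ComplexModulus.

Local Open Scope ereal_scope.

Lemma esumZl_ge0 (R : realType) (T : choiceType) (D : set T) (a : T -> \bar R) (r : R) :
  (0 <= r)%R -> (forall x, 0 <= a x) ->
  \esum_(i in D) (r%:E * a i) = r%:E * \esum_(i in D) a i.
Proof.
move=> r0 a0; rewrite /esum -ereal_supZl //; last first.
  by apply/set0P; exists 0; exists set0 => //; [exact: fsets_set0 | rewrite fsbig_set0].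
congr ereal_sup; rewrite image_comp; apply: eq_imagel => F _ /=.
by rewrite ge0_mule_fsumr.
Qed.

(* combining two bounds through |a + b|^2 <= 2 |a|^2 + 2 |b|^2 *)
Lemma le_double_sum (R : realType) (s u v : \bar R) (b c : R) :
  s <= 2%:E * u + 2%:E * v -> u <= b%:E -> v <= c%:E -> s <= (2 * b + 2 * c)%R%:E.
Proof.
move=> hs hu hv; apply: le_trans hs _.
have -> : (2 * b + 2 * c)%R%:E = 2%:E * b%:E + 2%:E * c%:E by [].
by apply: leeD; apply: lee_wpmul2l.
Qed.

Section SquaredL2Norm.
Variables (R : realType) (X : countType).
Implicit Types f g : vec R X.

Lemma sqnormE f : sqnorm f = \esum_(x in [set: X]) (sqmod (f x))%:E.
Proof. by []. Qed.

Lemma sqnorm_ge0 f : 0 <= sqnorm f.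
Proof. by apply: esum_ge0 => x _; rewrite lee_fin sqmod_ge0. Qed.

Lemma sqnorm_le f g (k : R) : (0 <= k)%R ->
  (forall x, sqmod (f x) <= k * sqmod (g x))%R -> sqnorm f <= k%:E * sqnorm g.
Proof.
move=> k0 H; rewrite !sqnormE -esumZl_ge0 // => [|x]; last by rewrite lee_fin sqmod_ge0.
by apply: le_esum => x _; rewrite -EFinM lee_fin.
Qed.

Lemma sqnorm_pt f x : (sqmod (f x))%:E <= sqnorm f.
Proof.
apply: esum_ge; exists [set x]; first by split; [exact: finite_set1 | by []].
by rewrite fsbig_set1.
Qed.

Lemma sqnorm_add f g :
  sqnorm (fun x => f x + g x)%R <= 2%:E * sqnorm f + 2%:E * sqnorm g.
Proof.
have mod0 (h : vec R X) x : 0 <= (sqmod (h x))%:E by rewrite lee_fin sqmod_ge0.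
have dbl0 (h : vec R X) x : 0 <= 2%:E * (sqmod (h x))%:E.
  by rewrite -EFinM lee_fin mulr_ge0 ?sqmod_ge0.
rewrite !sqnormE -(esumZl_ge0 _ _ (mod0 f)) // -(esumZl_ge0 _ _ (mod0 g)) //.
rewrite -esumD => [|x _|x _]; [|exact: dbl0|exact: dbl0].
apply: le_esum => x _; rewrite -!EFinM -EFinD lee_fin -mulrDr; exact: sqmodD.
Qed.

Lemma sqnorm_single (y : X) (v : R[i]) :
  sqnorm (fun w => if w == y then v else 0%R) = (sqmod v)%:E.
Proof.
rewrite sqnormE (eq_esum (b := fun w => if w \in [set y] then (sqmod v)%:E else 0)).
  by rewrite -esum_mkcond esum_set1 // lee_fin sqmod_ge0.
by move=> w _; rewrite in_set1; case: (w == y); rewrite ?sqmod0.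
Qed.

Lemma in_l2_finite f : in_l2 f -> exists2 t : R, (0 <= t)%R & sqnorm f = t%:E.
Proof. by move: (sqnorm_ge0 f); rewrite /in_l2; case: (sqnorm f) => // t; exists t. Qed.

Lemma in_l2_le f g :
  (forall w, sqmod (f w) <= sqmod (g w))%R -> in_l2 g -> in_l2 f.
Proof.
move=> H hg; apply: (le_lt_trans (@sqnorm_le f g 1 _ _)) => // [w|].
  by rewrite mul1r.
by rewrite mul1e.
Qed.

Lemma in_l2_restrict (b : X -> bool) f :
  in_l2 f -> in_l2 (fun w => if b w then f w else 0%R).
Proof.
by apply: in_l2_le => w; case: (b w); rewrite ?sqmod0 ?sqmod_ge0.
Qed.

Lemma in_l2_delta (y : X) : in_l2 (delta R y).
Proof. by rewrite /in_l2 /delta sqnorm_single ltry. Qed.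

Lemma in_l2_0 : in_l2 (fun _ : X => 0%R : R[i]).
Proof. by rewrite /in_l2 sqnormE esum1 // => x _; rewrite sqmod0. Qed.

Lemma in_l2_add f g : in_l2 f -> in_l2 g -> in_l2 (fun x => f x + g x)%R.
Proof.
move=> hf hg; apply: le_lt_trans (sqnorm_add f g) _.
by apply: lte_add_pinfty; apply: lte_mul_pinfty.
Qed.

Lemma in_l2_scale (a : R[i]) f : in_l2 f -> in_l2 (fun x => a * f x)%R.
Proof.
move=> hf; apply: (le_lt_trans (@sqnorm_le _ f (sqmod a) (sqmod_ge0 a) _)).
  by move=> w; rewrite sqmodM.
by apply: lte_mul_pinfty; rewrite ?lee_fin ?sqmod_ge0.
Qed.

Lemma in_l2_sub f g : in_l2 f -> in_l2 g -> in_l2 (fun x => f x - g x)%R.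
Proof.
move=> hf hg; have := in_l2_add hf (in_l2_scale (-1)%R hg).
by congr in_l2; apply: funext => x; rewrite mulN1r.
Qed.

Lemma sqnorm_tail f (e : R) : in_l2 f -> (0 < e)%R ->
  exists s : seq X, sqnorm (fun w => if w \in s then 0%R else f w) <= e%:E.
Proof.
move=> hf e0; have [t t0 ht] := in_l2_finite hf.
have : (t - e)%:E < sqnorm f by rewrite ht lte_fin ltrBlDr ltrDl.
rewrite sqnormE /esum => /ereal_sup_gt [_ [F [finF _] <-]] hlt.
exists (finmap.enum_fset (fset_set F)).
set a := fun w => (sqmod (f w))%:E; set Q := sqnorm _.
have a0 w : 0 <= a w by rewrite /a lee_fin sqmod_ge0.
have split_F : sqnorm f = \esum_(w in F) a w + Q.
  rewrite esum_mkcond /Q !sqnormE -esumD; last 2 first.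
  - by move=> w _; case: ifP.
  - by move=> w _; rewrite lee_fin sqmod_ge0.
  apply: eq_esum => w _; rewrite in_fset_set //; case: ifP => _.
    by rewrite sqmod0 adde0.
  by rewrite add0e.
rewrite esum_fset // ht in split_F.
have Q0 : 0 <= Q by exact: sqnorm_ge0.
move: hlt split_F; rewrite -/(a _); case: (\sum_(x \in F) a x) => [p| |] //; last by case: Q Q0.
case: Q Q0 => [q| |] // q0 hlt; rewrite -EFinD lte_fin in hlt * => -[tE].
by rewrite lee_fin; lra.
Qed.

End SquaredL2Norm.
Local Close Scope ereal_scope.

Section BoundedOperators.
Variables (R : realType) (X : countType).
Implicit Types (S T : op R X) (f g : vec R X).

Lemma op0 S : bounded_op S -> S (fun _ => 0) = (fun _ => 0).
Proof.
case=> _ lin _; have := lin (-1) _ _ (in_l2_0 R X) (in_l2_0 R X).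
have -> : (fun x : X => -1 * (0 : R[i]) + 0) = (fun _ => 0).
  by apply: funext => x; rewrite mulr0 addr0.
move=> h; apply: funext => x; have := congr1 (fun F => F x) h => /=.
by rewrite mulN1r addNr.
Qed.

Lemma opD S f g : bounded_op S -> in_l2 f -> in_l2 g ->
  S (fun x => f x + g x) = (fun x => S f x + S g x).
Proof.
case=> _ lin _ hf hg; have := lin 1 _ _ hf hg.
have -> : (fun x => 1 * f x + g x) = (fun x => f x + g x).
  by apply: funext => x; rewrite mul1r.
by move=> ->; apply: funext => x; rewrite mul1r.
Qed.

Lemma opZ S (a : R[i]) f : bounded_op S -> in_l2 f ->
  S (fun x => a * f x) = (fun x => a * S f x).
Proof.
move=> hS hf; have [_ lin _] := hS; have := lin a _ _ hf (in_l2_0 R X).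
have -> : (fun x => a * f x + 0) = (fun x => a * f x).
  by apply: funext => x; rewrite addr0.
by move=> ->; rewrite op0 //; apply: funext => x; rewrite addr0.
Qed.

Lemma opB S f g : bounded_op S -> in_l2 f -> in_l2 g ->
  S (fun x => f x - g x) = (fun x => S f x - S g x).
Proof.
case=> _ lin _ hf hg; have := lin (-1) _ _ hg hf.
have -> : (fun x => -1 * g x + f x) = (fun x => f x - g x).
  by apply: funext => x; rewrite mulN1r addrC.
by move=> ->; apply: funext => x; rewrite mulN1r addrC.
Qed.

Lemma bounded_op_bound S : bounded_op S -> exists2 c : R, 0 <= c &
  forall f, in_l2 f -> (sqnorm (S f) <= c%:E * sqnorm f)%E.
Proof.
case=> _ _ [c hc]; exists (Num.max c 0); first by rewrite le_max lexx orbT.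
move=> f hf; apply: (le_trans (hc f hf)); apply: lee_wpmul2r; first exact: sqnorm_ge0.
by rewrite lee_fin le_max lexx.
Qed.

Lemma bounded_id : bounded_op (fun f : vec R X => f).
Proof. by split => //; exists 1 => f hf; rewrite mul1e. Qed.

Lemma bounded_add S T : bounded_op S -> bounded_op T ->
  bounded_op (fun f x => S f x + T f x).
Proof.
move=> hS hT; have [c1 c10 h1] := bounded_op_bound hS.
have [c2 c20 h2] := bounded_op_bound hT.
have [l2S linS _] := hS; have [l2T linT _] := hT.
split.
- by move=> f hf; apply: in_l2_add; [exact: l2S | exact: l2T].
- move=> a f g hf hg; rewrite linS // linT //; apply: funext => x /=.
  by rewrite mulrDr addrACA.
- exists (2 * c1 + 2 * c2) => f hf; have [t t0 ht] := in_l2_finite hf.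
  rewrite ht -EFinM mulrDl -!mulrA; apply: le_double_sum (sqnorm_add _ _) _ _.
  + by rewrite EFinM -ht; exact: h1.
  + by rewrite EFinM -ht; exact: h2.
Qed.

Lemma bounded_scale (a : R[i]) S : bounded_op S -> bounded_op (fun f x => a * S f x).
Proof.
move=> hS; have [c c0 h] := bounded_op_bound hS; have [l2S linS _] := hS.
split.
- by move=> f hf; apply: in_l2_scale; exact: l2S.
- by move=> b f g hf hg; rewrite linS //; apply: funext => x /=; rewrite mulrDr mulrCA.
- exists (sqmod a * c) => f hf.
  apply: le_trans (sqnorm_le (sqmod_ge0 a) (fun x => _)) _ => [x|].
    by rewrite sqmodM.
  by rewrite EFinM -muleA; apply: lee_wpmul2l; [rewrite lee_fin sqmod_ge0 | exact: h].
Qed.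

Lemma bounded_comp S T : bounded_op S -> bounded_op T -> bounded_op (fun f => S (T f)).
Proof.
move=> hS hT; have [c1 c10 h1] := bounded_op_bound hS.
have [c2 c20 h2] := bounded_op_bound hT.
have [l2S linS _] := hS; have [l2T linT _] := hT.
split.
- by move=> f hf; apply: l2S; exact: l2T.
- by move=> a f g hf hg; rewrite linT // linS //; exact: l2T.
- exists (c1 * c2) => f hf; apply: le_trans (h1 _ (l2T f hf)) _.
  by rewrite EFinM -muleA; apply: lee_wpmul2l; [rewrite lee_fin | exact: h2].
Qed.

(* If the matrix entries (S delta_z)(y) vanish for all z in the support of g,
   then (S g)(y) = 0; first for finitely supported truncations of g ... *)
Lemma op_vanish_finite S g y (s : seq X) : bounded_op S -> in_l2 g ->
  (forall z, g z != 0 -> S (delta R z) y = 0) ->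
  S (fun w => if w \in s then g w else 0) y = 0.
Proof.
move=> hS hg hz; elim: s => [|z s IH].
  by have -> : (fun w : X => if w \in [::] then g w else 0) = (fun _ => 0);
    [apply: funext | rewrite op0].
have [zs|zs] := boolP (z \in s).
  have -> : (fun w => if w \in z :: s then g w else 0) =
            (fun w => if w \in s then g w else 0).
    by apply: funext => w; rewrite in_cons; have [->|] := eqVneq w z; rewrite ?zs.
  exact: IH.
have -> : (fun w => if w \in z :: s then g w else 0) =
          (fun w => g z * delta R z w + (if w \in s then g w else 0)).
  apply: funext => w; rewrite in_cons /delta; have [->|] := eqVneq w z.
    by rewrite (negbTE zs) mulr1 addr0.
  by rewrite mulr0 add0r.
rewrite opD //; [|exact/in_l2_scale/in_l2_delta | exact: in_l2_restrict].
rewrite /= opZ //; last exact: in_l2_delta.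
have [->|nz] := eqVneq (g z) 0; first by rewrite mul0r add0r; exact: IH.
by rewrite hz // mulr0 add0r; exact: IH.
Qed.

(* ... and then for g itself, since S is continuous and g is approximated by
   its finite truncations *)
Lemma op_vanish S g y : bounded_op S -> in_l2 g ->
  (forall z, g z != 0 -> S (delta R z) y = 0) -> S g y = 0.
Proof.
move=> hS hg hz; apply/eqP/negPn/negP => nz.
have sv0 := sqmod_gt0 nz; set sv := sqmod (S g y) in sv0.
have [c c0 hc] := bounded_op_bound hS.
set e := sv / (2 * (c + 1)).
have e0 : 0 < e by rewrite /e divr_gt0 // mulr_gt0 // ltr_pwDr.
have he : e * (2 * (c + 1)) = sv by rewrite /e mulfVK // mulf_neq0 // gt_eqF // ltr_pwDr.
have [s hs] := sqnorm_tail hg e0.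
set tl := fun w => if w \in s then 0 else g w.
have l2tl : in_l2 tl by rewrite /tl; under eq_fun do rewrite -if_neg; exact: in_l2_restrict.
have SgE : S g y = S tl y.
  have -> : g = (fun w => tl w + if w \in s then g w else 0).
    by apply: funext => w; rewrite /tl; case: ifP; rewrite ?add0r ?addr0.
  rewrite opD //; last exact: in_l2_restrict.
  by rewrite /= -[RHS]addr0; congr (_ + _); exact: op_vanish_finite.
have : (sv%:E <= (c * e)%:E)%E.
  rewrite /sv SgE; apply: le_trans (sqnorm_pt _ y) _.
  by apply: le_trans (hc _ l2tl) _; rewrite EFinM; apply: lee_wpmul2l; rewrite ?lee_fin.
rewrite lee_fin; nra.
Qed.

End BoundedOperators.

(* the elementary estimate behind the choice of tolerances below *)
Lemma damped_sq_le (R : realType) (e c : R) : 0 <= c -> c * (e / (1 + c)) ^+ 2 <= e ^+ 2.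
Proof.
move=> c0; have c1 : 0 < 1 + c by lra.
have le_sq : c <= (1 + c) ^+ 2 by rewrite sqrrD expr1n; nra.
rewrite expr_div_n mulrA ler_pdivrMr ?exprn_gt0 // mulrC.
by apply: ler_wpM2l; rewrite ?sqr_ge0.
Qed.

Section Approximation.
Variables (R : realType) (X : countType).
Implicit Types (S T : op R X) (P Q : op R X -> Prop).

Lemma op_close_refl S (e : R) : op_close S S e.
Proof.
move=> f hf; have -> : (fun x => S f x - S f x) = (fun _ => 0).
  by apply: funext => x; rewrite subrr.
rewrite sqnormE esum1 => [|x _]; last by rewrite sqmod0.
by apply: mule_ge0; [rewrite lee_fin sqr_ge0 | exact: sqnorm_ge0].
Qed.

Lemma op_close_add S S' T T' (e : R) :
  op_close S S' (e / 2) -> op_close T T' (e / 2) ->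
  op_close (fun f x => S f x + T f x) (fun f x => S' f x + T' f x) e.
Proof.
move=> h1 h2 f hf; have [t t0 ht] := in_l2_finite hf.
have -> : (fun x => S f x + T f x - (S' f x + T' f x)) =
          (fun x => (S f x - S' f x) + (T f x - T' f x)).
  by apply: funext => x; rewrite opprD addrACA.
have -> : ((e ^+ 2)%:E * sqnorm f)%E = (2 * ((e / 2) ^+ 2 * t) + 2 * ((e / 2) ^+ 2 * t))%:E.
  by rewrite ht -EFinM; congr EFin; field.
by apply: le_double_sum (sqnorm_add _ _) _ _; rewrite EFinM -ht; [exact: h1 | exact: h2].
Qed.

Lemma op_close_scale (a : R[i]) S S' (e : R) :
  op_close S S' (e / (1 + sqmod a)) ->
  op_close (fun f x => a * S f x) (fun f x => a * S' f x) e.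
Proof.
move=> h f hf; have [t t0 ht] := in_l2_finite hf.
apply: le_trans (sqnorm_le (g := fun x => S f x - S' f x) (sqmod_ge0 a) _) _.
  by move=> x; rewrite -mulrBr sqmodM.
apply: le_trans (lee_wpmul2l _ (h f hf)) _; first by rewrite lee_fin sqmod_ge0.
rewrite ht -!EFinM lee_fin mulrA ler_wpM2r //.
exact: damped_sq_le (sqmod_ge0 a).
Qed.

(* ||ST - S'T'|| <= ||S - S'|| ||T|| + ||S'|| ||T - T'|| *)
Lemma op_close_comp S S' T T' (cT cS e : R) :
  bounded_op S' -> bounded_op T -> bounded_op T' -> 0 <= cT -> 0 <= cS ->
  (forall f, in_l2 f -> (sqnorm (T f) <= cT%:E * sqnorm f)%E) ->
  (forall f, in_l2 f -> (sqnorm (S' f) <= cS%:E * sqnorm f)%E) ->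
  op_close S S' (e / 2 / (1 + cT)) -> op_close T T' (e / 2 / (1 + cS)) ->
  op_close (fun f => S (T f)) (fun f => S' (T' f)) e.
Proof.
move=> hS' hT hT' cT0 cS0 hcT hcS h1 h2 f hf; have [t t0 ht] := in_l2_finite hf.
have lT : in_l2 (T f) by case: hT => + _ _; apply.
have lT' : in_l2 (T' f) by case: hT' => + _ _; apply.
have -> : (fun x => S (T f) x - S' (T' f) x) =
          (fun x => (S (T f) x - S' (T f) x) + S' (fun w => T f w - T' f w) x).
  by rewrite (opB hS') //; apply: funext => x; rewrite addrA subrK.
set e1 := e / 2 / (1 + cT); set e2 := e / 2 / (1 + cS).
apply: (@le_trans _ _ (2 * (e1 ^+ 2 * (cT * t)) + 2 * (cS * (e2 ^+ 2 * t)))%:E).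
  apply: le_double_sum (sqnorm_add _ _) _ _.
  - apply: le_trans (h1 _ lT) _; rewrite (EFinM (e1 ^+ 2)); apply: lee_wpmul2l.
      by rewrite lee_fin sqr_ge0.
    by rewrite EFinM -ht; exact: hcT.
  - apply: le_trans (hcS _ (in_l2_sub lT lT')) _; rewrite (EFinM cS).
    by apply: lee_wpmul2l; rewrite ?lee_fin // EFinM -ht; exact: h2.
rewrite ht -EFinM lee_fin.
have := damped_sq_le (e / 2) cT0; have := damped_sq_le (e / 2) cS0.
have : 4 * (e / 2) ^+ 2 = e ^+ 2 by field.
rewrite -/e1 -/e2; nra.
Qed.

Lemma op_closure_base P S : bounded_op S -> P S -> op_closure P S.
Proof. by move=> hS PS; split=> // e _; exists S => //; exact: op_close_refl. Qed.

Lemma op_closure_mono P Q S : (forall T, P T -> Q T) -> op_closure P S -> op_closure Q S.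
Proof. by move=> PQ [hS hap]; split=> // e e0; have [T /PQ QT c] := hap e e0; exists T. Qed.

Lemma op_closure_add P S T :
  (forall S' T', P S' -> P T' -> P (fun f x => S' f x + T' f x)) ->
  op_closure P S -> op_closure P T -> op_closure P (fun f x => S f x + T f x).
Proof.
move=> Padd [hS hSa] [hT hTa]; split; first exact: bounded_add.
move=> e e0; have e20 : 0 < e / 2 by rewrite divr_gt0.
have [S' PS' c1] := hSa _ e20; have [T' PT' c2] := hTa _ e20.
by exists (fun f x => S' f x + T' f x); [exact: Padd | exact: op_close_add].
Qed.

Lemma op_closure_scale P (a : R[i]) S :
  (forall S', P S' -> P (fun f x => a * S' f x)) ->
  op_closure P S -> op_closure P (fun f x => a * S f x).
Proof.
move=> Pscale [hS hSa]; split; first exact: bounded_scale.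
move=> e e0; have e10 : 0 < e / (1 + sqmod a).
  by rewrite divr_gt0 // ltr_pwDl // sqmod_ge0.
have [S' PS' c] := hSa _ e10.
by exists (fun f x => a * S' f x); [exact: Pscale | exact: op_close_scale].
Qed.

Lemma op_closure_comp P Q S T :
  (forall S', P S' -> bounded_op S') -> (forall T', Q T' -> bounded_op T') ->
  (forall S' T', P S' -> Q T' -> P (fun f => S' (T' f))) ->
  op_closure P S -> op_closure Q T -> op_closure P (fun f => S (T f)).
Proof.
move=> Pb Qb Pcomp [hS hSa] [hT hTa]; split; first exact: bounded_comp.
move=> e e0; have [cT cT0 hcT] := bounded_op_bound hT.
have e1 : 0 < e / 2 / (1 + cT) by rewrite !divr_gt0 // ltr_pwDl.
have [S' PS' c1] := hSa _ e1; have [cS cS0 hcS] := bounded_op_bound (Pb _ PS').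
have e2 : 0 < e / 2 / (1 + cS) by rewrite !divr_gt0 // ltr_pwDl.
have [T' QT' c2] := hTa _ e2.
exists (fun f => S' (T' f)); first exact: Pcomp.
exact: (op_close_comp (Pb _ PS') hT (Qb _ QT') cT0 cS0 hcT hcS c1 c2).
Qed.

End Approximation.

Section DistanceToA.
Variables (R : realType) (X : countType) (d : X -> X -> R) (A : set X).
Hypotheses (hm : is_metric d) (hA : A !=set0).

Lemma dA_lbound x y : has_lbound [set d x z + d y z + 1 | z in A].
Proof. by have [d0 _ _ _] := hm; exists 0 => _ [z _ <-]; rewrite !addr_ge0. Qed.

Lemma dA_ge x y : d x y + 1 <= dA01 d A x y.
Proof.
have [d0 deq dsym dtri] := hm; have [a Aa] := hA; apply: lb_le_inf.
  by exists (d x a + d y a + 1); exists a.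
by move=> _ [z Az <-]; rewrite lerD2r -(dsym z y); exact: dtri.
Qed.

Lemma dA_tri x y z : dA01 d A x y <= d x z + dA01 d A z y.
Proof.
have [d0 deq dsym dtri] := hm; have [a Aa] := hA.
rewrite addrC -lerBlDr; apply: lb_le_inf.
  by exists (d z a + d y a + 1); exists a.
move=> _ [w Aw <-]; rewrite lerBlDr.
have : dA01 d A x y <= d x w + d y w + 1 by apply: (ge_inf (dA_lbound x y)); exists w.
have := dtri x z w; lra.
Qed.

Lemma dA_diag x : 2 * dist_to d A x + 1 <= dA01 d A x x.
Proof.
have [d0 deq dsym dtri] := hm; have [a Aa] := hA.
have lb : has_lbound [set d x z | z in A] by exists 0 => _ [z _ <-].
apply: lb_le_inf; first by exists (d x a + d x a + 1); exists a.
move=> _ [w Aw <-]; have : dist_to d A x <= d x w by apply: (ge_inf lb); exists w.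
lra.
Qed.

Lemma dA_diag_unbounded (L : R) : (forall k : nat, ~` Nbhd d A k !=set0) ->
  exists x, L <= dA01 d A x x.
Proof.
move=> hN; have [x nx] := hN (Num.bound `|L|); exists x.
apply: le_trans (dA_diag x); have := archi_boundP (normr_ge0 L).
have : ~ (dist_to d A x <= (Num.bound `|L|)%:R) by exact: nx.
move/negP; rewrite -ltNge; have := ler_norm L; have : 0 <= (Num.bound `|L|)%:R :> R by [].
lra.
Qed.

End DistanceToA.

Section Propagation.
Variables (R : realType) (X : countType) (d : X -> X -> R) (A : set X).
Hypotheses (hm : is_metric d) (hA : A !=set0).
Implicit Types S T : op R X.

Lemma finite_prop_dA_prop S : finite_prop_dA d A S -> finite_prop d S.
Proof.
have [_ _ dsym _] := hm; move=> [L hL]; exists L => x y hxy; apply: hL.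
by apply: le_trans (dA_ge hm hA y x); rewrite dsym; lra.
Qed.

Lemma finite_prop_dA_add S T : finite_prop_dA d A S -> finite_prop_dA d A T ->
  finite_prop_dA d A (fun f x => S f x + T f x).
Proof.
move=> [L1 hL1] [L2 hL2]; exists (Num.max L1 L2) => x y hxy.
by rewrite hL1 ?hL2 ?addr0 //; apply: le_trans hxy; rewrite le_max lexx ?orbT.
Qed.

Lemma finite_prop_dA_scale (a : R[i]) S : finite_prop_dA d A S ->
  finite_prop_dA d A (fun f x => a * S f x).
Proof. by move=> [L hL]; exists L => x y hxy; rewrite hL // mulr0. Qed.

(* propagation lengths add up under composition: S T delta_x is a combination
   of the S delta_z with z d-close to x, hence d^A-far from y *)
Lemma finite_prop_dA_comp S T : bounded_op S -> bounded_op T ->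
  finite_prop_dA d A S -> finite_prop d T -> finite_prop_dA d A (fun f => S (T f)).
Proof.
move=> hS [l2T _ _] [L1 hL1] [L2 hL2]; exists (L1 + L2) => x y hxy.
apply: (op_vanish hS (l2T _ (in_l2_delta R x))) => z nz; apply: hL1.
have hzx : d z x < L2 by rewrite ltNge; apply: contra nz => /hL2 ->.
have := dA_tri hm hA x y z; have [_ _ dsym _] := hm; rewrite (dsym x z); lra.
Qed.

Lemma finite_prop_id : finite_prop d (fun f : vec R X => f).
Proof.
have [_ deq _ _] := hm; exists 1 => x y hxy; rewrite /delta; case: eqP => // exy.
by move: hxy; rewrite exy (proj2 (deq y y) erefl) ler10.
Qed.

Definition rank_one (y : X) : op R X := fun h w => h y * delta R y w.

Lemma bounded_rank_one y : bounded_op (rank_one y).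
Proof.
split.
- by move=> h _; apply: in_l2_scale; exact: in_l2_delta.
- by move=> a g g' _ _; apply: funext => w; rewrite /rank_one mulrDl mulrA.
- exists 1 => h _; rewrite mul1e; apply: le_trans (sqnorm_le ler01 _) _ => [w|].
    rewrite mul1r sqmodM /delta; case: eqP => [->|_]; first by rewrite sqmod1 mulr1.
    by rewrite sqmod0 mulr0 sqmod_ge0.
  by rewrite mul1e.
Qed.

Lemma finite_prop_dA_rank_one y : finite_prop_dA d A (rank_one y).
Proof.
exists (dA01 d A y y + 1) => x' y' h; rewrite /rank_one /delta.
have [ex|] := eqVneq y x'; last by rewrite mul0r.
have [ey|] := eqVneq y' y; last by rewrite mulr0.
by exfalso; move: h; rewrite -ex ey; lra.
Qed.

End Propagation.

Section InnerProduct.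
Variables (R : realType) (X : countType).

Lemma rsum_single (y : X) (r : R) : rsum (fun x => if x == y then r else 0) = r.
Proof.
have E (s : R) : (\esum_(x in [set: X]) (Num.max (if x == y then s else 0) 0)%:E)%E
                 = (Num.max s 0)%:E.
  rewrite (eq_esum (b := fun x => if x \in [set y] then (Num.max s 0)%:E else 0%E)).
    by rewrite -esum_mkcond esum_set1 // lee_fin le_max lexx orbT.
  by move=> x _; rewrite in_set1; case: (x == y) => //=; rewrite maxxx.
rewrite /rsum E.
have -> : (\esum_(x in [set: X]) (Num.max (- (if x == y then r else 0)) 0)%:E)%E
          = (Num.max (- r) 0)%:E.
  by rewrite -E; apply: eq_esum => x _; case: (x == y); rewrite ?oppr0.
have [r0|r0] := leP 0 r; first by rewrite max_r ?subr0 // oppr_le0.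
by rewrite max_l ?sub0r ?opprK // oppr_ge0 ltW.
Qed.

Lemma ip_delta (y : X) (h : vec R X) : ip (delta R y) h = h y.
Proof.
have re_im x : conjc (delta R y x) * h x = if x == y then h y else 0.
  by rewrite /delta; case: eqP => [->|_]; rewrite ?conjc1 ?mul1r // conjc0 mul0r.
rewrite /ip; under eq_fun do rewrite re_im (fun_if (@reC R)).
under [in X in Complex _ X]eq_fun do rewrite re_im (fun_if (@imC R)).
by rewrite /= !rsum_single; case: (h y).
Qed.

End InnerProduct.

Section UniformRoeSubmodule.
Variables (R : realType) (X : countType) (d : X -> X -> R) (A : set X).
Hypotheses (hm : is_metric d) (hA : A !=set0).
Implicit Types S T : op R X.

Lemma MdA_sub_Cu T : MdA d A T -> Cu d T.
Proof.
apply: op_closure_mono => S [hS pS]; by split=> //; exact: (finite_prop_dA_prop hm hA).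
Qed.

Lemma MdA_add S T : MdA d A S -> MdA d A T -> MdA d A (fun f x => S f x + T f x).
Proof.
apply: op_closure_add => S' T' [hS' pS'] [hT' pT'].
by split; [exact: bounded_add | exact: finite_prop_dA_add].
Qed.

Lemma MdA_scale (a : R[i]) S : MdA d A S -> MdA d A (fun f x => a * S f x).
Proof.
apply: op_closure_scale => S' [hS' pS'].
by split; [exact: bounded_scale | exact: finite_prop_dA_scale].
Qed.

Lemma MdA_comp S T : MdA d A S -> Cu d T -> MdA d A (fun f => S (T f)).
Proof.
apply: op_closure_comp => [S' [] // | T' [] // | S' T' [hS' pS'] [hT' pT']].
by split; [exact: bounded_comp | exact: (finite_prop_dA_comp hm hA)].
Qed.

Lemma Cu_id : Cu d (fun f => f).
Proof.
by apply: op_closure_base; [|split]; [exact: bounded_id | exact: bounded_id | exact: (finite_prop_id hm)].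
Qed.

(* the identity is not in M_{X,d^A}: an operator of finite d^A-propagation
   vanishes at (x, x) for x far from A, so it is at distance 1 from the identity *)
Lemma id_notin_MdA : (forall k : nat, ~` Nbhd d A k !=set0) -> ~ MdA d A (fun f => f).
Proof.
move=> hN [_ hap]; have h2 : (0 : R) < 1 / 2 by rewrite divr_gt0.
have [S [_ [L hL]] hc] := hap _ h2; have [x hx] := dA_diag_unbounded hm hA L hN.
have := hc (delta R x) (in_l2_delta R x); rewrite {2}/delta sqnorm_single sqmod1 mule1.
move/(le_trans (sqnorm_pt _ x)); rewrite hL // /delta eqxx subr0 sqmod1 lee_fin.
have -> : ((1 / 2) ^+ 2 : R) = 1 / 4 by field.
lra.
Qed.

Lemma MdA_rank_one y : MdA d A (rank_one y).
Proof.
apply: op_closure_base; first exact: bounded_rank_one.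
by split; [exact: bounded_rank_one | exact: finite_prop_dA_rank_one].
Qed.

(* the orthogonal complement of M_{X,d^A} is trivial: pairing T g with the
   rank-one operators of M_{X,d^A} recovers every coordinate of T g *)
Lemma MdA_orthogonal_trivial T :
  (forall S, MdA d A S -> forall f g, in_l2 f -> in_l2 g -> ip (S f) (T g) = 0) ->
  forall f, in_l2 f -> T f = (fun _ => 0).
Proof.
move=> orth f hf; apply: funext => y.
have := orth _ (MdA_rank_one y) _ _ (in_l2_delta R y) hf.
have -> : rank_one y (delta R y) = delta R y.
  by apply: funext => w; rewrite /rank_one /delta eqxx mul1r.
by rewrite ip_delta.
Qed.

End UniformRoeSubmodule.

Theorem mainTheorem7 (R : realType) (X : countType) (d : X -> X -> R) (A : set X) :
  is_metric d -> discrete_metric d -> A !=set0 ->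
  (forall k : nat, ~` Nbhd d A k !=set0) ->
  [/\ (forall T, MdA d A T -> Cu d T) /\
      (forall S T, MdA d A S -> MdA d A T -> MdA d A (fun f x => S f x + T f x)),
      (forall (a : R[i]) S, MdA d A S -> MdA d A (fun f x => a * S f x)),
      (forall S T, MdA d A S -> Cu d T -> MdA d A (fun f => S (T f))),
      (exists2 T, Cu d T & ~ MdA d A T)
    & forall T, Cu d T ->
        (forall S, MdA d A S -> forall f g, in_l2 f -> in_l2 g -> ip (S f) (T g) = 0) ->
        forall f, in_l2 f -> T f = (fun _ => 0)].
Proof.
move=> hm _ hA hN; split.
- by split=> [T|S T]; [exact: MdA_sub_Cu | exact: MdA_add].
- exact: MdA_scale.
- exact: MdA_comp.
- by exists (fun f => f); [exact: Cu_id | exact: id_notin_MdA].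
- by move=> T _; exact: MdA_orthogonal_trivial.
Qed.
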